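(* Let $\mathcal{N}=\{1,\dots,n\}$ be a finite set of agents, $\mathcal{S}$ a finite global state space and $\mathcal{A}=\prod_{i\in\mathcal{N}}\mathcal{A}_i$ a finite joint action space, where each global state $\mathbf{s}$ determines local states $s_i$ and each joint action is $\mathbf{a}=(a_1,\dots,a_n)$. Let $\alpha\ge0$, $\gamma\in[0,1)$, let $\phi^*_0,\phi^*_1,\dots,\phi^*_n\in\mathbb{R}$, and for each $i$ let $\nu^*_i(s_i)$ and $q^*_i(s_i,a_i)$ be real-valued local value and $Q$-functions. Suppose the weight function is $$w^{\text{tot}}_{\boldsymbol{\nu}^*}(\mathbf{s},\mathbf{a})=e^{-1}\exp\Big(\frac{1}{1+\alpha}\Big(\sum_{i\in\mathcal{N}}\phi^*_i\big(q^*_i(s_i,a_i)-\nu^*_i(s_i)\big)+\gamma\phi^*_0\Big)\Big).$$ Let $\rho^U_{\text{tot}}(\mathbf{s},\mathbf{a})=d^U(\mathbf{s})\,\mu^U(\mathbf{a}\mid\mathbf{s})$ be the state-action distribution of the union dataset, with joint behavior policy $\mu^U$, and assume $\mu^U$ is decomposable into local behavior policies: $\mu^U(\mathbf{a}\mid\mathbf{s})=\prod_{i\in\mathcal{N}}\mu^U_i(a_i\mid s_i)$. Let $\pi_i^*$ be an optimal solution to the local weighted behavior cloning objective $$\max_{\pi_i}\ \mathbb{E}_{(\mathbf{s},\mathbf{a})\sim\rho^U_{\text{tot}}}\big[w^{\text{tot}}_{\boldsymbol{\nu}^*}(\mathbf{s},\mathbf{a})\log\pi_i(a_i\mid s_i)\big].$$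 Then $$\pi^*_i(a_i\mid s_i)=\frac{1}{\Delta(s_i)}\exp\Big(\frac{\phi^*_i}{1+\alpha}\,q^*_i(s_i,a_i)+\log\mu^U_i(a_i\mid s_i)\Big),\quad \Delta(s_i)=\sum_{a_i\in\mathcal{A}_i}\exp\Big(\frac{\phi^*_i}{1+\alpha}\,q^*_i(s_i,a_i)+\log\mu^U_i(a_i\mid s_i)\Big).$$
   Context: In the paper, $\boldsymbol{\nu}^*=\{\nu^*_i\}$ and $\phi^*$ are optimal parameters of a linear mixing $\nu^{\text{tot}*}(\mathbf{s})=\sum_i\phi^*_i\nu^*_i(s_i)+\phi^*_0$ of local value functions; the reward $r(\mathbf{s},\mathbf{a})=\log(\rho^E_{\text{tot}}/\rho^U_{\text{tot}})$ is assumed to decompose as $\sum_i\phi^*_i r_i(s_i,a_i)+\phi^*_0$; and $q^*_i(s_i,a_i)=r_i(s_i,a_i)+\gamma\,\mathbb{E}_{s_i'\mid s_i,a_i}[\nu^*_i(s_i')]$. Under these assumptions the weight $w^{\text{tot}}_{\boldsymbol{\nu}^*}=\exp(A^{\text{tot}}_{\boldsymbol{\nu}^*}/(1+\alpha)-1)$ takes the displayed decomposed form, which is what the statement uses. $\Delta(s_i)$ is the normalization constant. *)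

From HB Require Import structures.
From mathcomp Require Import all_boot all_order all_algebra.
From mathcomp Require Import reals sequences exp.
Set Implicit Arguments. Unset Strict Implicit. Unset Printing Implicit Defensive.
Import Order.TTheory GRing.Theory Num.Theory.
Local Open Scope ring_scope.

Section Defs.
Variable R : realType.

Definition is_distr (T : finType) (p : T -> R) : Prop :=
  (forall t, 0 <= p t) /\ \sum_(t : T) p t = 1.

(* a conditional distribution (policy) pi(b | t) with full support,
   so that log pi(b | t) is a genuine real number *)
Definition pos_policy (T B : finType) (p : T -> B -> R) : Prop :=
  (forall t b, 0 < p t b) /\ (forall t, \sum_(b : B) p t b = 1).

Variables (n : nat) (S : finType) (Sl A : 'I_n -> finType)
  (loc : forall i : 'I_n, S -> Sl i).

Definition jaction := {dffun forall i : 'I_n, A i}.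

Definition wtot (alpha gamma phi0 : R) (phi : 'I_n -> R)
  (q : forall i : 'I_n, Sl i -> A i -> R) (nu : forall i : 'I_n, Sl i -> R)
  (s : S) (a : jaction) : R :=
  expR (-1) * expR ((1 + alpha)^-1 *
    (\sum_(i < n) phi i * (q i (loc i s) (a i) - nu i (loc i s)) + gamma * phi0)).

Definition local_wbc_obj (d : S -> R) (mu : S -> jaction -> R) (w : S -> jaction -> R)
  (i : 'I_n) (pi : Sl i -> A i -> R) : R :=
  \sum_(s : S) \sum_(a : jaction) d s * mu s a * w s a * ln (pi (loc i s) (a i)).

Definition Delta (alpha phii : R) (i : 'I_n) (qi : Sl i -> A i -> R)
  (mui : Sl i -> A i -> R) (si : Sl i) : R :=
  \sum_(b : A i) expR (phii / (1 + alpha) * qi si b + ln (mui si b)).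

End Defs.

From HB Require Import structures.
From mathcomp Require Import all_boot all_order all_algebra perm.
From mathcomp Require Import reals sequences exp.
From mathcomp Require Import ring lra.
Set Implicit Arguments. Unset Strict Implicit. Unset Printing Implicit Defensive.
Import Order.TTheory GRing.Theory Num.Theory.
Local Open Scope ring_scope.

(* Because mu^U is a product of local policies, mu^U(a | s) w(s, a) factors as
   m(s_i, a_i) G(s, a), where m(s_i, b) = exp(phi_i q_i(s_i, b) / (1 + alpha)
   + log mu_i(b | s_i)) and G does not depend on a_i.  Summing out the other
   agents' actions, the objective becomes
   sum_s c(s) sum_b m(s_i, b) log pi_i(b | s_i) with c >= 0 and c(s) > 0
   whenever d(s) > 0.  By Gibbs' inequality, each inner sum is uniquely
   maximised by the normalisation of m(s_i, .), so an optimal pi_i must agree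
   with it on every local state that is reached with positive probability. *)

Lemma sumr_gt0 (R : numDomainType) (I : finType) (P : pred I) (F : I -> R) i0 :
  P i0 -> (forall i, P i -> 0 < F i) -> 0 < \sum_(i | P i) F i.
Proof.
move=> Pi0 F_gt0; rewrite (bigD1 i0) //=; apply: ltr_wpDr; last exact: F_gt0.
by apply: sumr_ge0 => i /andP[Pi _]; exact: ltW (F_gt0 i Pi).
Qed.
Arguments sumr_gt0 {R I P F} i0.

Section Gibbs.
Variables (R : realType) (B : finType).

Lemma ln_le_sub1 (t : R) : 0 < t -> ln t <= t - 1.
Proof. by move=> t_gt0; have := expR_ge1Dx (ln t); rewrite lnK ?posrE //; lra. Qed.

Lemma ln_lt_sub1 (t : R) : 0 < t -> t != 1 -> ln t < t - 1.
Proof.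
move=> t_gt0 t_neq1; have lnt_neq0 : ln t != 0 by rewrite ln_eq0.
by have := expR_gt1Dx lnt_neq0; rewrite lnK ?posrE //; lra.
Qed.

Definition weighted_loglik (m p : B -> R) : R := \sum_b m b * ln (p b).

Definition normalized (m : B -> R) (b : B) : R := m b / \sum_b' m b'.

Lemma normalized_gt0 (m : B -> R) b :
  (forall b, 0 < m b) -> 0 < normalized m b.
Proof.
move=> m_gt0; rewrite /normalized divr_gt0 //.
by apply: (sumr_gt0 b) => // ? _.
Qed.

Lemma sum_normalized (m : B -> R) (b0 : B) :
  (forall b, 0 < m b) -> \sum_b normalized m b = 1.
Proof.
move=> m_gt0; rewrite /normalized -mulr_suml divff // gt_eqF //.
by apply: (sumr_gt0 b0) => // ? _.
Qed.

Lemma weighted_loglik_lt_normalized (m p : B -> R) (b0 : B) :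
  (forall b, 0 < m b) -> (forall b, 0 < p b) -> \sum_b p b = 1 ->
  p b0 != normalized m b0 ->
  weighted_loglik m p < weighted_loglik m (normalized m).
Proof.
move=> m_gt0 p_gt0 p_sum1 p_neq.
set Z := \sum_b m b; have Z_gt0 : 0 < Z by apply: (sumr_gt0 b0) => // ? _.
have pm_gt0 b : 0 < normalized m b by exact: normalized_gt0.
have ratio_gt0 b : 0 < p b / normalized m b by rewrite divr_gt0.
have bound b : m b * (p b / normalized m b - 1) = Z * p b - m b.
  by rewrite /normalized -/Z; field; rewrite !gt_eqF.
rewrite -subr_lt0 /weighted_loglik -sumrB.
have zero_sum : \sum_b m b * (p b / normalized m b - 1) = 0.
  by rewrite (eq_bigr _ (fun b _ => bound b)) sumrB -mulr_sumr p_sum1 mulr1 subrr.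
rewrite -[X in _ < X]zero_sum.
rewrite [X in X < _](bigD1 b0) // [X in _ < X](bigD1 b0) //=.
apply: ltr_leD; last apply: ler_sum => b _; rewrite -mulrBr -ln_div ?posrE //.
- rewrite ltr_pM2l //; apply: ln_lt_sub1 => //.
  by apply: contra p_neq => /eqP/divr1_eq ->.
- by apply: ler_wpM2l; [exact: ltW | exact: ln_le_sub1].
Qed.

End Gibbs.

Section WeightedBehaviorCloning.
Variables (R : realType) (S T B : finType) (loc : S -> T).
Variables (c : S -> R) (m : T -> B -> R).
Hypotheses (c_ge0 : forall s, 0 <= c s) (m_gt0 : forall t b, 0 < m t b).

Lemma wbc_argmax (pistar : T -> B -> R) (s0 : S) :
  pos_policy pistar ->
  (forall pi : T -> B -> R, pos_policy pi ->
     \sum_s c s * weighted_loglik (m (loc s)) (pi (loc s))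
     <= \sum_s c s * weighted_loglik (m (loc s)) (pistar (loc s))) ->
  0 < c s0 -> pistar (loc s0) =1 normalized (m (loc s0)).
Proof.
move=> [ps_gt0 ps_sum1] opt cs0_gt0 b0; set t := loc s0.
apply/eqP/negPn/negP => neq.
have gibbs := weighted_loglik_lt_normalized (m_gt0 t) (ps_gt0 t) (ps_sum1 t) neq.
pose pi u := if u == t then normalized (m t) else pistar u.
have pi_pos : pos_policy pi.
  split=> u; rewrite /pi; case: eqP => // _.
  - by move=> b; exact: normalized_gt0.
  - exact: sum_normalized b0 (m_gt0 t).
have gain s : c s * weighted_loglik (m (loc s)) (pi (loc s))
              - c s * weighted_loglik (m (loc s)) (pistar (loc s))
  = if loc s == t then c s * (weighted_loglik (m t) (normalized (m t))
                              - weighted_loglik (m t) (pistar t))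
    else 0.
  by rewrite /pi; case: eqP => [->|_]; rewrite ?mulrBr ?subrr.
have := opt pi pi_pos; apply/negP; rewrite -ltNge -subr_gt0 -sumrB.
rewrite (eq_bigr _ (fun s _ => gain s)) (bigD1 s0) //= eqxx.
apply: ltr_pwDl; first by rewrite mulr_gt0 // subr_gt0.
apply: sumr_ge0 => s _; case: eqP => // _.
by rewrite mulr_ge0 // subr_ge0 ltW.
Qed.

End WeightedBehaviorCloning.

Section JointActions.
Variables (n : nat) (A : 'I_n -> finType) (i : 'I_n).

Definition upd_action (a : jaction A) (x : A i) : jaction A :=
  finfun (@dfwith _ A (fun k => a k) i x).

Lemma upd_action_at a x : upd_action a x i = x.
Proof. by rewrite /upd_action ffunE dfwith_in. Qed.

Lemma upd_action_other a x j : j != i -> upd_action a x j = a j.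
Proof. by rewrite eq_sym => ij; rewrite /upd_action ffunE dfwith_out. Qed.

Definition swap_action (b b' : A i) (a : jaction A) : jaction A :=
  upd_action a (tperm b b' (a i)).

Lemma swap_actionK b b' : involutive (swap_action b b').
Proof.
move=> a; apply/ffunP => j; rewrite /swap_action.
have [->|ji] := eqVneq j i; first by rewrite !upd_action_at tpermK.
by rewrite !(upd_action_other _ _ ji).
Qed.

Lemma exists_action_at (x : A i) :
  (forall j, inhabited (A j)) -> exists a : jaction A, a i = x.
Proof.
move=> A_inh; have /fin_all_exists[f _] : forall j, exists b : A j, True.
  by move=> j; case: (A_inh j) => b; exists b.
by exists (upd_action (finfun f) x); rewrite upd_action_at.
Qed.

Section LocallyConstant.
Variables (V : pzSemiRingType) (G : jaction A -> V).
Hypothesis G_upd : forall a x, G (upd_action a x) = G a.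

Lemma sum_fiber_indep b b' :
  \sum_(a : jaction A | a i == b) G a = \sum_(a : jaction A | a i == b') G a.
Proof.
rewrite (reindex_inj (inv_inj (swap_actionK b b'))) /=.
apply: eq_big => a; rewrite /swap_action ?G_upd //.
by rewrite upd_action_at (canF_eq (tpermK _ _)) tpermL.
Qed.

Lemma sum_local_factor (f : A i -> V) (b0 : A i) :
  \sum_(a : jaction A) f (a i) * G a
  = (\sum_b f b) * \sum_(a : jaction A | a i == b0) G a.
Proof.
rewrite (partition_big (fun a : jaction A => a i) predT) //= mulr_suml.
apply: eq_bigr => b _; rewrite (sum_fiber_indep b0 b) mulr_sumr.
by apply: eq_bigr => a /eqP <-.
Qed.

End LocallyConstant.
End JointActions.

Lemma pos_policy_inhabited (R : realType) (T B : finType) (p : T -> B -> R)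
  (t : T) : pos_policy p -> inhabited B.
Proof.
move=> [_ p_sum1]; have [b _|B0] := pickP (@predT B); first exact: inhabits b.
by have := p_sum1 t; rewrite big_pred0 // => /esym/eqP; rewrite oner_eq0.
Qed.

Section Factorization.
Local Unset Implicit Arguments.
Variables (R : realType) (n : nat) (S : finType) (Sl A : 'I_n -> finType).
Variables (loc : forall j : 'I_n, S -> Sl j) (alpha gamma phi0 : R) (phi : 'I_n -> R).
Variables (nu : forall j : 'I_n, Sl j -> R) (q : forall j : 'I_n, Sl j -> A j -> R).
Variables (d : S -> R) (mu : S -> jaction A -> R).
Variables (mul : forall j : 'I_n, Sl j -> A j -> R) (i : 'I_n).
Local Set Implicit Arguments.

Definition local_weight (t : Sl i) (b : A i) : R :=
  expR (phi i / (1 + alpha) * q i t b + ln (mul i t b)).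

Definition other_weight (s : S) (a : jaction A) : R :=
  expR (-1) * expR ((1 + alpha)^-1 *
    (\sum_(j < n | j != i) phi j * (q j (loc j s) (a j) - nu j (loc j s))
      - phi i * nu i (loc i s) + gamma * phi0))
  * \prod_(j < n | j != i) mul j (loc j s) (a j).

Lemma other_weight_upd s a (x : A i) :
  other_weight s (upd_action a x) = other_weight s a.
Proof.
rewrite /other_weight.
have -> : \prod_(j < n | j != i) mul j (loc j s) (upd_action a x j)
          = \prod_(j < n | j != i) mul j (loc j s) (a j).
  by apply: eq_bigr => j ji; rewrite upd_action_other.
have -> : \sum_(j < n | j != i) phi j * (q j (loc j s) (upd_action a x j) - nu j (loc j s))
          = \sum_(j < n | j != i) phi j * (q j (loc j s) (a j) - nu j (loc j s)).
  by apply: eq_bigr => j ji; rewrite upd_action_other.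
by [].
Qed.

Hypothesis mul_gt0 : forall j t b, 0 < mul j t b.
Hypothesis mu_prod : forall s a, mu s a = \prod_(j < n) mul j (loc j s) (a j).

Lemma local_weight_gt0 t b : 0 < local_weight t b.
Proof. exact: expR_gt0. Qed.

Lemma other_weight_gt0 s a : 0 < other_weight s a.
Proof. by rewrite /other_weight !mulr_gt0 ?expR_gt0 // prodr_gt0. Qed.

Lemma mu_wtot_factor s a :
  mu s a * wtot loc alpha gamma phi0 phi q nu s a
  = local_weight (loc i s) (a i) * other_weight s a.
Proof.
rewrite mu_prod /wtot /local_weight /other_weight.
rewrite (bigD1 i) //= [\sum_(j < n) _](bigD1 i) //= expRD lnK ?posrE //.
set T := \sum_(j < n | j != i) _; set Q := q i _ _; set V := nu i _.
have -> : expR ((1 + alpha)^-1 * (phi i * (Q - V) + T + gamma * phi0))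
          = expR (phi i / (1 + alpha) * Q)
            * expR ((1 + alpha)^-1 * (T - phi i * V + gamma * phi0)).
  by rewrite -expRD; congr expR; ring.
by ring.
Qed.

Lemma local_wbc_obj_factor (b0 : A i) (pi : Sl i -> A i -> R) :
  local_wbc_obj loc d mu (wtot loc alpha gamma phi0 phi q nu) pi
  = \sum_s (d s * \sum_(a : jaction A | a i == b0) other_weight s a)
           * weighted_loglik (local_weight (loc i s)) (pi (loc i s)).
Proof.
rewrite /local_wbc_obj; apply: eq_bigr => s _.
have term a :
    d s * mu s a * wtot loc alpha gamma phi0 phi q nu s a * ln (pi (loc i s) (a i))
  = d s * (local_weight (loc i s) (a i) * ln (pi (loc i s) (a i)) * other_weight s a).
  by rewrite -(mulrA (d s)) mu_wtot_factor; ring.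
rewrite (eq_bigr _ (fun a _ => term a)) -mulr_sumr.
rewrite (sum_local_factor (other_weight_upd s)
          (fun b => local_weight (loc i s) b * ln (pi (loc i s) b)) b0).
by rewrite /weighted_loglik; ring.
Qed.

End Factorization.

Theorem proposition5 (R : realType) (n : nat) (S : finType)
  (Sl A : 'I_n -> finType) (loc : forall i : 'I_n, S -> Sl i)
  (alpha gamma phi0 : R) (phi : 'I_n -> R)
  (nu : forall i : 'I_n, Sl i -> R) (q : forall i : 'I_n, Sl i -> A i -> R)
  (d : S -> R) (mu : S -> jaction A -> R)
  (mul : forall i : 'I_n, Sl i -> A i -> R)
  (i : 'I_n) (pistar : Sl i -> A i -> R) :
  0 <= alpha -> 0 <= gamma -> gamma < 1 ->
  is_distr d ->
  (forall j : 'I_n, pos_policy (mul j)) ->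
  (forall s a, mu s a = \prod_(j < n) mul j (loc j s) (a j)) ->
  pos_policy pistar ->
  (forall pi : Sl i -> A i -> R, pos_policy pi ->
     local_wbc_obj loc d mu (wtot loc alpha gamma phi0 phi q nu) pi
     <= local_wbc_obj loc d mu (wtot loc alpha gamma phi0 phi q nu) pistar) ->
  forall si : Sl i, (exists s : S, loc i s = si /\ 0 < d s) ->
  forall ai : A i,
    pistar si ai =
      expR (phi i / (1 + alpha) * q i si ai + ln (mul i si ai))
      / Delta alpha (phi i) (q i) (mul i) si.
Proof.
(* Neither the range of alpha nor that of gamma matters: gamma only enters a
   factor independent of a_i, and 1 + alpha = 0 merely makes both sides use
   the same junk inverse. *)
move=> _ _ _ [d_ge0 _] mul_pol mu_prod pistar_pol opt _ [s0 [<- ds0_gt0]] ai.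
have mul_gt0 j : forall t b, 0 < mul j t b := (mul_pol j).1.
pose G := other_weight loc alpha gamma phi0 phi nu q mul i.
pose c s := d s * \sum_(a : jaction A | a i == ai) G s a.
have fiber_gt0 s : 0 < \sum_(a : jaction A | a i == ai) G s a.
  have A_inh j : inhabited (A j) := pos_policy_inhabited (loc j s) (mul_pol j).
  have [a0 a0i] := exists_action_at ai A_inh.
  apply: (sumr_gt0 a0); first by rewrite a0i.
  by move=> a _; exact: other_weight_gt0.
have c_ge0 s : 0 <= c s by rewrite mulr_ge0 // ltW.
have c_s0_gt0 : 0 < c s0 by rewrite mulr_gt0.
pose m := local_weight alpha phi q mul (i:=i).
have c_opt pi : pos_policy pi ->
    \sum_s c s * weighted_loglik (m (loc i s)) (pi (loc i s))
    <= \sum_s c s * weighted_loglik (m (loc i s)) (pistar (loc i s)).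
  by move/opt; rewrite !(local_wbc_obj_factor _ _ _ _ _ _ _ mul_gt0 mu_prod ai).
exact: (wbc_argmax c_ge0 (local_weight_gt0 alpha phi q mul (i:=i))
         pistar_pol c_opt c_s0_gt0 ai).
Qed.
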